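(* Let $n\ge4$, $i\in[n-2]$ and $m=n-i-1$. Then $$\sum_{k=1}^{i}\frac{q_{n-k,m}}{2}\,(r_{n-k,m}+i-k+1)\, d_{k,n}\,(i-k)! \;=\; \frac{q_{n,m}}{2}\,(r_{n,m}+i+1)\, i!,$$ where $d_{k,n}=|\mathcal D_{k,n}|$.
   Context: $[n]=\{1,\ldots,n\}$. For integers $l$ and $m\ne0$, $q_{l,m}$ and $r_{l,m}$ are the quotient and remainder of $l$ divided by $m$ ($l=q_{l,m}m+r_{l,m}$, $0\le r_{l,m}<m$). A finite set $A\subset\mathbb P$ with $|A|\ge2$ is periodic if the differences between consecutive elements (in increasing order) are all equal. For $n\ge3$, $k\in[n-2]$, $\mathcal D_{k,n}$ is the set of words $u=u_1\cdots u_k$ of $k$ distinct letters of $[n]$ such that $[n]\setminus\{u_1,\ldots,u_k\}$ is periodic and for every $j<k$ the set $[n]\setminus\{u_1,\ldots,u_j\}$ is not periodic. *)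

From mathcomp Require Import all_boot all_order all_algebra.
Set Implicit Arguments. Unset Strict Implicit. Unset Printing Implicit Defensive.

(* A finite set of positive integers, given as its strictly increasing list
   of elements s, is periodic iff |s| >= 2 and all consecutive differences
   are equal (to the first one). *)
Definition periodic (s : seq nat) : bool :=
  (1 < size s) &&
  all (fun j => nth 0 s j.+1 - nth 0 s j == nth 0 s 1 - nth 0 s 0)
      (iota 0 (size s).-1).

Definition compl (n : nat) (u : seq nat) : seq nat :=
  [seq x <- iota 1 n | x \notin u].

Definition inD (k n : nat) (u : seq nat) : bool :=
  [&& size u == k, uniq u, all (fun x => 1 <= x <= n) u,
      periodic (compl n u) &
      all (fun j => ~~ periodic (compl n (take j u))) (iota 1 k.-1)].

Fixpoint words (k n : nat) : seq (seq nat) :=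
  match k with
  | 0 => [:: [::]]
  | k'.+1 => [seq x :: w | x <- iota 1 n, w <- words k' n]
  end.

Definition d (k n : nat) : nat := count (inD k n) (words k n).

From mathcomp Require Import all_boot all_order all_algebra zify.
Set Implicit Arguments. Unset Strict Implicit. Unset Printing Implicit Defensive.

(* Let f(n, i) count the words of i distinct letters of [n] whose complement is
   periodic.  Such a complement is an arithmetic progression with m + 1 = n - i
   terms inside [n], and each one is reached by i! words, so f(n, i) = P(n, m) i!
   where P(s, m) counts the (m+1)-term progressions inside an s-term one; summing
   over the step gives 2 P(s, m) = q_{s,m} (r_{s,m} + s - m).  Cutting a word
   instead after its shortest prefix u_1...u_k with periodic complement gives
   f(n, i) = sum_k d_{k,n} P(n - k, m) (i - k)!, because that complement is an
   (n-k)-term progression and the remaining i - k letters are counted as before.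
   Equating the two expressions, with n - k - m = i - k + 1, is the identity. *)

Lemma count_sum (T : Type) (a : pred T) (s : seq T) :
  count a s = \sum_(x <- s) (a x : nat).
Proof. by rewrite -sum1_count big_mkcond. Qed.

Lemma mem_words j n w :
  (w \in words j n) = (size w == j) && all (fun x => x \in iota 1 n) w.
Proof.
elim: j w => [|j IH] [|x w] //=.
- by apply/negbTE/negP; case/allpairsP => -[y v] /= [_ _].
- apply/allpairsP/idP => [[[y v] /= [yn vw [-> ->]]]|].
    by rewrite eqSS yn -IH.
  rewrite eqSS => /and3P[sw xn aw]; exists (x, w); split=> //=.
  by rewrite IH sw.
Qed.

Lemma uniq_words j n : uniq (words j n).
Proof.
elim: j => [|j IH] //=; apply: allpairs_uniq; rewrite ?iota_uniq //.
by move=> [x1 w1] [x2 w2] _ _ /= [-> ->].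
Qed.

Lemma count_words_perm_eq j n X :
  uniq X -> size X = j -> all (fun x => x \in iota 1 n) X ->
  count (fun w => perm_eq w X) (words j n) = j`!.
Proof.
move=> uX <- aX; rewrite -size_filter -size_permutations //; apply: perm_size.
apply: uniq_perm; rewrite ?filter_uniq ?uniq_words ?permutations_uniq //.
move=> w; rewrite mem_filter mem_permutations mem_words.
case pw: (perm_eq w X) => //=; rewrite (perm_size pw) eqxx /=.
by apply/allP => x; rewrite (perm_mem pw) => /(allP aX).
Qed.

Lemma count_words_split (p : pred (seq nat)) k i n : k <= i ->
  count p (words i n) =
  \sum_(v <- words k n) count (fun w => p (v ++ w)) (words (i - k) n).
Proof.
move=> ki; rewrite -{1}(subnKC ki); move: (i - k) => r.
elim: k p {ki} => [|k IH] p /=; first by rewrite big_seq1.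
rewrite count_sum !big_allpairs_dep /=; apply: eq_bigr => x _.
by rewrite -(count_sum (fun w => p (x :: w))) IH.
Qed.

Definition arith_prog (c e t : nat) : seq nat := mkseq (fun l => c + e * l) t.

Lemma size_arith_prog c e t : size (arith_prog c e t) = t.
Proof. exact: size_mkseq. Qed.

Lemma nth_arith_prog c e t l : l < t -> nth 0 (arith_prog c e t) l = c + e * l.
Proof. exact: nth_mkseq. Qed.

Lemma periodic_arith_prog c e t : 1 < t -> periodic (arith_prog c e t).
Proof.
move=> t1; rewrite /periodic size_arith_prog t1 /=.
apply/allP => l; rewrite mem_iota => /andP[_ lt].
rewrite !nth_arith_prog; lia.
Qed.

Lemma periodic_sortedE x : sorted ltn x -> periodic x ->
  x = arith_prog (nth 0 x 0) (nth 0 x 1 - nth 0 x 0) (size x).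
Proof.
move=> so /andP[s2 /allP pe].
apply: (@eq_from_nth _ 0); first by rewrite size_arith_prog.
elim=> [|l IH] lt; first by rewrite nth_arith_prog // muln0 addn0.
have lt' : l < (size x).-1 by lia.
have := pe l; rewrite mem_iota /= => /(_ lt') /eqP step.
have incr : nth 0 x l < nth 0 x l.+1.
  by apply: (sorted_ltn_nth ltn_trans 0 so); rewrite ?unfold_in //= ltnW.
have {}IH : nth 0 x l = nth 0 x 0 + (nth 0 x 1 - nth 0 x 0) * l.
  by rewrite IH ?nth_arith_prog // ltnW.
rewrite nth_arith_prog // mulnS; rewrite IH in step incr; lia.
Qed.

Lemma eq_arith_prog c e c' e' t : 1 < t ->
  (arith_prog c e t == arith_prog c' e' t) = (c == c') && (e == e').
Proof.
move=> t1; apply/eqP/andP => [E|[/eqP-> /eqP->]] //.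
have := congr1 (nth 0 ^~ 0) E; have := congr1 (nth 0 ^~ 1) E.
rewrite /= !nth_arith_prog; lia.
Qed.

Lemma sorted_arith_prog c e t : sorted leq (arith_prog c e t).
Proof.
apply: (homo_sorted (e := leq)); last exact: iota_sorted.
by move=> x y xy; rewrite leq_add2l leq_mul2l xy orbT.
Qed.

Lemma uniq_arith_prog c e t : 1 < t -> uniq (arith_prog c e t) = (0 < e).
Proof.
move=> t1; case: (posnP e) => [->|e0].
  apply/negbTE/negP => /(nth_uniq 0 (_ : 0 < _) (_ : 1 < _)).
  by rewrite size_arith_prog !nth_arith_prog //; lia.
rewrite map_inj_uniq ?iota_uniq // => x y /eqP.
by rewrite eqn_add2l eqn_pmul2l // => /eqP.
Qed.

Lemma all_arith_prog_ltn c e t s : 0 < t ->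
  all (fun x => x < s) (arith_prog c e t) = (c + e * t.-1 < s).
Proof.
move=> t0; rewrite all_map; apply/allP/idP => [all_lt|lt l].
  by apply: (all_lt t.-1); rewrite mem_iota; lia.
by rewrite mem_iota /= => lt_l; apply: leq_ltn_trans lt; rewrite leq_add2l leq_mul2l; lia.
Qed.

Lemma map_arith_prog b e c f t :
  map (fun x => b + e * x) (arith_prog c f t) = arith_prog (b + e * c) (e * f) t.
Proof. by rewrite -map_comp; apply: eq_map => l /=; rewrite mulnDr mulnA addnA. Qed.

Definition seq_diff (T : eqType) (S w : seq T) : seq T := [seq x <- S | x \notin w].

Lemma seq_diff_cat (T : eqType) (S v w : seq T) :
  seq_diff S (v ++ w) = seq_diff (seq_diff S v) w.
Proof.
by rewrite /seq_diff -filter_predI; apply: eq_filter => x /=; rewrite mem_cat negb_or andbC.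
Qed.

Lemma size_seq_diff (T : eqType) (S w : seq T) : uniq S -> uniq w -> {subset w <= S} ->
  size (seq_diff S w) = size S - size w.
Proof.
move=> uS uw wS; have -> : size w = count (mem w) S.
  rewrite -size_filter; apply/perm_size/uniq_perm; rewrite ?filter_uniq // => x.
  by rewrite mem_filter andb_idr //; apply: wS.
by rewrite size_filter -(count_predC (mem w) S) addKn.
Qed.

Definition inj_word (S w : seq nat) : bool := uniq w && all (fun x => x \in S) w.

Lemma count_words_seq_diff j n S T :
  sorted ltn S -> all (fun x => x \in iota 1 n) S -> sorted leq T ->
  size S = j + size T ->
  count (fun w => inj_word S w && (seq_diff S w == T)) (words j n) = inj_word S T * j`!.
Proof.
move=> soS rS soT sz; have uS : uniq S by rewrite (sorted_uniq ltn_trans ltnn).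
have [/andP[uT /allP TS]|bad] := boolP (inj_word S T); last first.
  rewrite mul0n; apply/eqP; rewrite -leqn0 leqNgt -has_count.
  apply/hasP => -[w _ /andP[_ /eqP wT]]; move: bad; rewrite -wT /inj_word filter_uniq //=.
  by apply/negP/negPn/allP => x; rewrite mem_filter => /andP[].
rewrite mul1n -(count_words_perm_eq (X := seq_diff S T) (n := n)); first last.
- by apply/allP => x; rewrite mem_filter => /andP[_ /(allP rS)].
- by rewrite size_seq_diff // sz addnK.
- exact: filter_uniq.
apply: eq_in_count => w _; apply/andP/idP => [[/andP[uw /allP wS] /eqP wT]|pw].
  apply: uniq_perm; rewrite ?filter_uniq // => x; rewrite mem_filter -wT mem_filter.
  by case xw: (x \in w); rewrite /= ?andNb // wS.
have ew := perm_mem pw; split.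
  rewrite /inj_word (perm_uniq pw) filter_uniq //=.
  by apply/allP => x; rewrite ew mem_filter => /andP[].
apply/eqP/(irr_sorted_eq ltn_trans ltnn) => [||x].
- exact: sorted_filter ltn_trans _ _ soS.
- by rewrite ltn_sorted_uniq_leq uT.
- rewrite mem_filter ew mem_filter negb_and negbK.
  by case xT: (x \in T) => /=; [exact: TS | case: (x \in S)].
Qed.

Lemma sum_ord_eq1 N x0 : x0 < N -> \sum_(x < N) (x0 == x :> nat) = 1.
Proof.
move=> lt; rewrite (bigD1 (Ordinal lt)) //= eqxx big1 // => x.
by rewrite -val_eqE eq_sym => /negbTE->.
Qed.

Lemma periodic_sub_arith_prog b e s t x : 0 < e -> 1 < t ->
  sorted ltn x -> size x = t -> {subset x <= arith_prog b e s} ->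
  (periodic x : nat) =
  \sum_(a < s.+1) \sum_(f < s.+1) (x == arith_prog (b + e * a) (e * f) t).
Proof.
move=> e0 t1 so sx xS.
have [px|npx] := boolP (periodic x); last first.
  rewrite big1 // => a _; rewrite big1 // => f _; apply/eqP; rewrite eqb0.
  by apply: contra npx => /eqP->; exact: periodic_arith_prog.
have x0S : nth 0 x 0 \in arith_prog b e s by apply/xS/mem_nth; rewrite sx ltnW.
have x1S : nth 0 x 1 \in arith_prog b e s by apply/xS/mem_nth; rewrite sx.
have x01 : nth 0 x 0 < nth 0 x 1.
  have := sorted_ltn_nth ltn_trans 0 so 0 1; rewrite !unfold_in /= sx.
  by move=> /(_ (ltnW t1) t1 isT).
move: (periodic_sortedE so px) x01; rewrite sx.
case/mapP: x0S => a0 _ /= ->; case/mapP: x1S => a1; rewrite mem_iota /= => a1s ->.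
rewrite ltn_add2l ltn_pmul2l // subnDl -mulnBr => -> a01; symmetry.
transitivity (\sum_(a < s.+1) (a0 == a) * \sum_(f < s.+1) (a1 - a0 == f)).
  apply: eq_bigr => a _; rewrite big_distrr; apply: eq_bigr => f _ /=.
  by rewrite eq_arith_prog // eqn_add2l !eqn_pmul2l // mulnb.
by rewrite -big_distrl /= !sum_ord_eq1 //; lia.
Qed.

Definition num_progs (s m : nat) : nat :=
  \sum_(a < s.+1) \sum_(e < s.+1) ((0 < e) && (a + m * e < s)).

Lemma count_periodic_seq_diff n j m S :
  0 < m -> sorted ltn S -> periodic S -> all (fun x => x \in iota 1 n) S ->
  size S = j + m.+1 ->
  count (fun w => inj_word S w && periodic (seq_diff S w)) (words j n)
  = num_progs (j + m.+1) m * j`!.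
Proof.
move=> m0 soS pS rS szS; set s := j + m.+1.
have uS : uniq S := sorted_uniq ltn_trans ltnn soS.
have S2 : 1 < size S by rewrite szS; lia.
set b := nth 0 S 0; set e := nth 0 S 1 - b.
have e0 : 0 < e.
  have := sorted_ltn_nth ltn_trans 0 soS 0 1; rewrite !unfold_in /= (ltnW S2) S2.
  by rewrite /e /b => /(_ isT isT); lia.
have Sap : S = arith_prog b e s by rewrite /s -szS; exact: periodic_sortedE.
have ginj : injective (fun l => b + e * l).
  by move=> x y /eqP; rewrite eqn_add2l eqn_pmul2l // => /eqP.
have memS x : (b + e * x \in S) = (x < s) by rewrite Sap (mem_map ginj) mem_iota.
pose T a f := arith_prog (b + e * a) (e * f) m.+1.
have sum_periodic w : w \in words j n ->
    (inj_word S w && periodic (seq_diff S w) : nat) =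
    \sum_(a < s.+1) \sum_(f < s.+1) (inj_word S w && (seq_diff S w == T a f)).
  rewrite mem_words => /andP[/eqP sw _].
  have [/andP[uw /allP wS]|_] := boolP (inj_word S w); last first.
    by rewrite big1 // => a _; rewrite big1.
  apply: periodic_sub_arith_prog => //.
  - exact: sorted_filter ltn_trans _ _ soS.
  - by rewrite size_seq_diff // szS sw; lia.
  - by move=> x; rewrite mem_filter -Sap => /andP[].
rewrite count_sum (eq_big_seq _ sum_periodic) exchange_big /= big_distrl /=.
apply: eq_bigr => a _; rewrite exchange_big /= big_distrl /=; apply: eq_bigr => f _.
rewrite -count_sum count_words_seq_diff ?sorted_arith_prog ?size_arith_prog //.
rewrite /T -map_arith_prog /inj_word (map_inj_uniq ginj) uniq_arith_prog //.
by rewrite all_map (eq_all memS) all_arith_prog_ltn // [f * _]mulnC.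
Qed.

Lemma sum_ord_ltn N K : \sum_(a < N) (a < K : nat) = minn N K.
Proof.
elim: N => [|N IH]; first by rewrite big_ord0 min0n.
by rewrite big_ord_recr /= IH; case: (ltnP N K); lia.
Qed.

Lemma num_progsE s m : num_progs s m = \sum_(e < s) (s - m * e.+1).
Proof.
rewrite /num_progs exchange_big /= big_ord_recl big1 // add0n.
apply: eq_bigr => e _; under eq_bigr do rewrite addnC -ltn_subRL.
by rewrite sum_ord_ltn lift0; lia.
Qed.

Lemma double_sum_subn_mul m N s : 0 < m -> s <= m * N ->
  2 * \sum_(e < N) (s - m * e.+1) = s %/ m * (s %% m + s - m).
Proof.
move=> m0; elim: N s => [|N IH] s sN.
  have -> : s = 0 by lia.
  by rewrite big_ord0 div0n.
rewrite big_ord_recl.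
under eq_bigr do rewrite lift0 mulnS subnDA.
rewrite /= muln1 mulnDr IH; last by rewrite mulnS in sN; lia.
have [sm|ms] := ltnP s m.
  have -> : s - m = 0 by lia.
  by rewrite div0n divn_small.
rewrite -(subnK ms) divnDr ?dvdnn // divnn m0 modnDr addnK.
have := divn_eq (s - m) m; have := ltn_pmod (s - m) m0.
move: (s - m) ((s - m) %/ m) ((s - m) %% m) => s' q r rm ->.
case: q => [|q]; first by rewrite !mul0n !add0n; lia.
nia.
Qed.

Lemma double_num_progs s m : 0 < m -> 2 * num_progs s m = s %/ m * (s %% m + s - m).
Proof.
move=> m0; rewrite num_progsE double_sum_subn_mul //.
by rewrite -{1}(mul1n s) leq_mul2r m0 orbT.
Qed.

Lemma sum_first_occurrence (b : nat -> bool) i :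
  \sum_(1 <= k < i.+1) (b k && all (fun j => ~~ b j) (iota 1 k.-1) : nat) =
  has b (iota 1 i).
Proof.
elim: i => [|i IH]; first by rewrite big_geq.
rewrite big_nat_recr // IH -[i.+1]addn1 iotaD has_cat /= orbF all_predC addn1 add1n /=.
by case: (has b _); case: (b _).
Qed.

Definition periodic_compl_word (n : nat) (u : seq nat) : bool :=
  inj_word (iota 1 n) u && periodic (compl n u).

Definition first_periodic_prefix (n k : nat) (u : seq nat) : bool :=
  periodic (compl n (take k u)) &&
  all (fun j => ~~ periodic (compl n (take j u))) (iota 1 k.-1).

Definition num_periodic_compl (n i : nat) : nat :=
  count (periodic_compl_word n) (words i n).

Lemma num_periodic_complE n i : i + 2 <= n ->
  num_periodic_compl n i = num_progs n (n - i - 1) * i`!.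
Proof.
move=> ni; rewrite /num_periodic_compl.
rewrite (@count_periodic_seq_diff n i (n - i - 1) (iota 1 n)); first last.
- by rewrite size_iota; lia.
- exact/allP.
- rewrite /periodic size_iota (_ : 1 < n) /=; last by lia.
  by apply/allP => l; rewrite mem_iota => /andP[_ lt]; rewrite !nth_iota; lia.
- exact: iota_ltn_sorted.
- lia.
by congr (num_progs _ _ * _); lia.
Qed.

Lemma periodic_compl_word_cat n k v w :
  size v = k -> all (fun x => x \in iota 1 n) v -> all (fun x => x \in iota 1 n) w ->
  periodic_compl_word n (v ++ w) && first_periodic_prefix n k (v ++ w) =
  inD k n v && (inj_word (compl n v) w && periodic (seq_diff (compl n v) w)).
Proof.
move=> <- rv rw.
rewrite /periodic_compl_word /first_periodic_prefix /inj_word /inD take_size_cat //.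
have -> : all (fun j => ~~ periodic (compl n (take j (v ++ w)))) (iota 1 (size v).-1)
        = all (fun j => ~~ periodic (compl n (take j v))) (iota 1 (size v).-1).
  by apply: eq_in_all => j; rewrite mem_iota => /andP[_ lt]; rewrite takel_cat //; lia.
have -> : all (fun x => x \in compl n v) w = ~~ has (fun x => x \in v) w.
  by rewrite -all_predC; apply: eq_in_all => x xw; rewrite mem_filter (allP rw x xw) andbT.
have -> : all (fun x => 1 <= x <= n) v = all (fun x => x \in iota 1 n) v.
  by apply: eq_all => x; rewrite mem_iota add1n ltnS.
have -> : compl n (v ++ w) = seq_diff (compl n v) w := seq_diff_cat _ _ _.
rewrite cat_uniq all_cat rv rw eqxx /=.
by case: (uniq v); case: (has _ w); case: (uniq w); case: (periodic _); case: (periodic _);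
  case: (all _ _).
Qed.

Lemma count_first_periodic_prefix n i k : 1 <= k <= i -> i + 2 <= n ->
  count (fun u => periodic_compl_word n u && first_periodic_prefix n k u) (words i n)
  = d k n * (num_progs (n - k) (n - i - 1) * (i - k)`!).
Proof.
move=> /andP[k1 ki] ni; rewrite (count_words_split _ _ ki) /d count_sum big_distrl /=.
apply: eq_big_seq => v; rewrite mem_words => /andP[/eqP vk rv].
rewrite (eq_in_count (a2 := fun w =>
    inD k n v && (inj_word (compl n v) w && periodic (seq_diff (compl n v) w)))); last first.
  by move=> w; rewrite mem_words => /andP[_ rw]; apply: periodic_compl_word_cat.
have [/and5P[_ uv _ pv _]|_] := boolP (inD k n v); last by rewrite mul0n count_pred0.
rewrite mul1n (@count_periodic_seq_diff n (i - k) (n - i - 1)) //; first last.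
- by rewrite size_seq_diff ?iota_uniq // ?size_iota ?vk; [lia | exact/allP].
- by apply/allP => x; rewrite mem_filter => /andP[].
- exact: sorted_filter ltn_trans _ _ (iota_ltn_sorted 1 n).
- lia.
by congr (num_progs _ _ * _); lia.
Qed.

Lemma num_periodic_compl_first n i : 1 <= i -> i + 2 <= n ->
  num_periodic_compl n i =
  \sum_(1 <= k < i.+1) d k n * (num_progs (n - k) (n - i - 1) * (i - k)`!).
Proof.
move=> i1 ni; transitivity (\sum_(1 <= k < i.+1)
    count (fun u => periodic_compl_word n u && first_periodic_prefix n k u) (words i n)).
  rewrite /num_periodic_compl count_sum; under [RHS]eq_bigr do rewrite count_sum.
  rewrite exchange_big /=; apply: eq_big_seq => u; rewrite mem_words => /andP[/eqP ui _].
  under eq_bigr do rewrite -mulnb.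
  rewrite -big_distrr /= (sum_first_occurrence (fun k => periodic (compl n (take k u)))).
  have [Pu|_] := boolP (periodic_compl_word n u); last by rewrite mul0n.
  rewrite mul1n; apply/esym/eqP; rewrite eqb1; apply/hasP; exists i.
    by rewrite mem_iota; lia.
  by rewrite -ui take_size; case/andP: Pu.
apply: eq_big_nat => k /andP[k1 ki].
by apply: count_first_periodic_prefix; rewrite // k1.
Qed.

Import GRing.Theory Num.Theory.
Local Open Scope ring_scope.

Lemma mulr_half_nat {R : numFieldType} (q x h : nat) : (2 * h = q * x)%N ->
  (q%:R / 2%:R) * x%:R = h%:R :> R.
Proof.
by move=> e; rewrite mulrAC -natrM -e natrM mulrAC divff ?mul1r // pnatr_eq0.
Qed.

Theorem mainTheorem10 (n i : nat) (hn : (4 <= n)%N) (hi1 : (1 <= i)%N)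
    (hi2 : (i <= n - 2)%N) :
  let m := (n - i - 1)%N in
  \sum_(1 <= k < i.+1)
     (((n - k) %/ m)%:R / 2%:R) * (((n - k) %% m + i - k + 1)%N)%:R
       * (d k n)%:R * ((i - k)`!)%:R
  = ((n %/ m)%:R / 2%:R) * ((n %% m + i + 1)%N)%:R * (i`!)%:R :> rat.
Proof.
move=> m; have m0 : (0 < m)%N by rewrite /m; lia.
have ni : (i + 2 <= n)%N by lia.
have -> : (n %% m + i + 1 = n %% m + n - m)%N by rewrite /m; lia.
rewrite (mulr_half_nat (double_num_progs n m0)) -natrM -(num_periodic_complE ni).
rewrite (num_periodic_compl_first hi1 ni) natr_sum; apply: eq_big_nat => k /andP[k1 ki].
have -> : ((n - k) %% m + i - k + 1 = (n - k) %% m + (n - k) - m)%N by rewrite /m; lia.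
rewrite (mulr_half_nat (double_num_progs (n - k) m0)) -!natrM.
by rewrite mulnA [(num_progs _ _ * _)%N]mulnC.
Qed.
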